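(* Let $p\geqslant 1$ and let $n_0,\dots,n_{p-1}>1$ be natural numbers; let $n$ be their least common multiple, and for $i\neq j$ let $d_{i,j}$ be the greatest common divisor of $n_i$ and $n_j$. Let $c_0,\dots,c_{p-1}$ be integers with $\sum_{i<p}c_i\,(n/n_i)=1$. Then for all positive rational numbers $t_0,\dots,t_{p-1}$ and $x$, putting $\beta=\prod_{i<p}t_i^{c_i(n/n_i)}$, we have $$\bigwedge_{i<p}\Re_{n_i}(x\cdot t_i)\iff \Re_n(x\cdot\beta)\wedge\bigwedge_{i\neq j}\Re_{d_{i,j}}(t_i\cdot t_j^{-1}).$$
   Context: For a natural number $k\geqslant 1$ and a positive rational $y$, $\Re_k(y)$ means that there exists a positive rational $x$ with $y=x^k$ (so $\Re_1(y)$ always holds). *)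

From mathcomp Require Import all_boot all_order all_algebra.
Set Implicit Arguments. Unset Strict Implicit. Unset Printing Implicit Defensive.
Import Order.TTheory GRing.Theory Num.Theory.
Local Open Scope ring_scope.

Definition Rek (k : nat) (y : rat) : Prop := exists x : rat, 0 < x /\ y = x ^+ k.

Definition lcm_all (p : nat) (ns : 'I_p -> nat) : nat := \big[lcmn/1%N]_(i < p) ns i.

From mathcomp Require Import all_boot all_order all_algebra.
Import Order.TTheory GRing.Theory Num.Theory.
Local Open Scope ring_scope.
Set Implicit Arguments. Unset Strict Implicit.

(* Put e_i := c_i (n / n_i), so that sum_i e_i = 1 and beta = prod_i t_i^e_i.
   Then x beta = prod_i (x t_i)^e_i, and each (x t_i)^e_i is an n-th power
   when x t_i is an n_i-th power.  Conversely
   x t_i = x beta * prod_j (t_i / t_j)^e_j, and (t_i / t_j)^e_j is an n_i-th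
   power because n_i divides d_ij (n / n_j) (as n_i n_j = lcm(n_i,n_j) d_ij
   divides n d_ij).  The divisibility conditions on the quotients are
   necessary since t_i / t_j = (x t_i) / (x t_j). *)

Lemma dvdn_gcd_mul_divn a b n : (0 < b)%N -> (a %| n)%N -> (b %| n)%N ->
  (a %| gcdn a b * (n %/ b))%N.
Proof.
move=> b_gt0 a_n b_n; rewrite -(dvdn_pmul2r b_gt0) -mulnA divnK //.
by rewrite -muln_lcm_gcd mulnC dvdn_mul // dvdn_lcm a_n b_n.
Qed.

Lemma prodr_exprz_sum (R : unitRingType) (I : Type) (r : seq I) (P : pred I)
    (u : R) (e : I -> int) :
  u \is a GRing.unit -> \prod_(i <- r | P i) u ^ e i = u ^ (\sum_(i <- r | P i) e i).
Proof. by move=> uu; rewrite (big_morph _ (exprzDr uu) (expr0z u)). Qed.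

Lemma mulr_prod_exprz_weights (F : fieldType) (I : Type) (r : seq I) (P : pred I)
    (u : F) (v : I -> F) (e : I -> int) :
  u != 0 -> (forall i, v i != 0) -> \sum_(i <- r | P i) e i = 1 ->
  u * \prod_(i <- r | P i) v i ^ e i = \prod_(i <- r | P i) (u * v i) ^ e i.
Proof.
move=> u0 v0 e1; rewrite -{1}[u]expr1z -e1 -prodr_exprz_sum ?unitfE // -big_split.
by apply: eq_bigr => i _; rewrite exprzMl ?unitfE.
Qed.

Lemma exprz_mulrn (R : unitRingType) (a : R) (c : int) (m : nat) :
  a ^ (c * m%:Z) = (a ^+ m) ^ c.
Proof. by rewrite mulrC -exprz_exp. Qed.

Section RootClosure.

Variable k : nat.

Lemma Rek1 : Rek k 1.
Proof. by exists 1; rewrite expr1n ltr01. Qed.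

Lemma RekM a b : Rek k a -> Rek k b -> Rek k (a * b).
Proof. by move=> [u [u0 ->]] [v [v0 ->]]; exists (u * v); rewrite mulr_gt0 // exprMn. Qed.

Lemma RekV a : Rek k a -> Rek k a^-1.
Proof. by move=> [u [u0 ->]]; exists u^-1; rewrite invr_gt0 u0 exprVn. Qed.

Lemma RekD a b : Rek k a -> Rek k b -> Rek k (a / b).
Proof. by move=> ha /RekV; apply: RekM. Qed.

Lemma Rek_exprz a (z : int) : Rek k a -> Rek k (a ^ z).
Proof. by move=> [u [u0 ->]]; exists (u ^ z); split; [exact: exprz_gt0 | exact: (exprzAC u k z)]. Qed.

Lemma Rek_prod (I : Type) (r : seq I) (P : pred I) (F : I -> rat) :
  (forall i, P i -> Rek k (F i)) -> Rek k (\prod_(i <- r | P i) F i).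
Proof. by move=> h; apply: big_ind => //; [exact: Rek1 | exact: RekM]. Qed.

Lemma Rek_dvd l a : (k %| l)%N -> Rek l a -> Rek k a.
Proof. by move=> /dvdnP [m ->] [u [u0 ->]]; exists (u ^+ m); rewrite exprn_gt0 // exprM. Qed.

Lemma Rek_exprn_dvd d m a : (k %| d * m)%N -> Rek d a -> Rek k (a ^+ m).
Proof.
move=> k_dm [u [u0 ->]]; apply: (Rek_dvd k_dm).
by exists u; rewrite -exprM.
Qed.

End RootClosure.

Theorem lemma2 (p : nat) (hp : (1 <= p)%N) (ns : 'I_p -> nat)
  (hns : forall i, (1 < ns i)%N) (c : 'I_p -> int)
  (hc : \sum_(i < p) c i * ((lcm_all ns %/ ns i)%N)%:Z = 1)
  (t : 'I_p -> rat) (ht : forall i, 0 < t i) (x : rat) (hx : 0 < x) :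
  (forall i, Rek (ns i) (x * t i)) <->
  (Rek (lcm_all ns) (x * \prod_(i < p) exprz (t i) (c i * ((lcm_all ns %/ ns i)%N)%:Z))
   /\ (forall i j : 'I_p, i != j -> Rek (gcdn (ns i) (ns j)) (t i / t j))).
Proof.
set n := lcm_all ns; set e := fun i => c i * ((n %/ ns i)%N)%:Z.
set beta := \prod_(i < p) _.
have ns_n i : (ns i %| n)%N by apply: biglcmn_sup.
have t0 i : t i != 0 by rewrite gt_eqF.
have x0 : x != 0 by rewrite gt_eqF.
split=> [hxt | [hb hg] i].
  split=> [|i j _].
    rewrite (mulr_prod_exprz_weights x0 t0 hc).
    apply: Rek_prod => i _; rewrite exprz_mulrn; apply/Rek_exprz/(Rek_exprn_dvd _ (hxt i)).
    by rewrite mulnC divnK.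
  have -> : t i / t j = (x * t i) / (x * t j) by rewrite invfM mulrACA divff ?mul1r.
  by apply: RekD; apply: Rek_dvd (hxt _); rewrite ?dvdn_gcdl ?dvdn_gcdr.
have tV0 j : (t j)^-1 != 0 by rewrite invr_eq0.
have -> : x * t i = x * beta * \prod_(j < p) (t i / t j) ^ e j.
  rewrite -(mulr_prod_exprz_weights (t0 i) tV0 hc).
  under eq_bigr => j _ do rewrite -expfV.
  have beta_gt0 : 0 < beta by apply: prodr_gt0 => j _; apply: exprz_gt0.
  by rewrite prodfV -/beta [t i / beta]mulrC mulrA mulfK ?gt_eqF.
apply: RekM; first exact: Rek_dvd hb.
apply: Rek_prod => j _; have [<-|ij] := eqVneq i j.
  by rewrite divff // exp1rz; apply: Rek1.
rewrite exprz_mulrn; apply/Rek_exprz/(Rek_exprn_dvd _ (hg i j ij)).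
by apply: dvdn_gcd_mul_divn; rewrite ?ns_n // ltnW.
Qed.
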